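(* Let $\mathcal{A}=\{A_1,\dots,A_m\}$ be a bimodal collection of pairwise disjoint nonempty subsets of a finite abelian group $G$, with internal difference groups $H_1,\dots,H_m$, such that $|A_1|<|H_1|$ and $|A_i|=|H_i|$ for all $2\le i\le m$. Then: (1) for all $2\le i\le m$, $A_i$ is a coset of $H_i$ and $H_i$ is a subgroup of $H_1$; (2) $A_1$ is a proper subset of a coset of $H_1$ and is a union of cosets of the subgroup $D=H_2+H_3+\dots+H_m$.
   Context: $G$ is written additively. The internal difference group $H_i$ of $A_i$ is the subgroup generated by all $x-y$ with $x,y\in A_i$; $A_i$ lies in a single coset of $H_i$ and $|A_i|\le|H_i|$. A collection $\{A_1,\dots,A_m\}$ of pairwise disjoint subsets of $G$ is bimodal if for every $i$ and every $\delta\in G\setminus\{0\}$, the number $N_i(\delta)$ of pairs $(a,b)$ with $a\in A_i$, $b\in A_j$ for some $j\neq i$, and $a-b=\delta$, satisfies $N_i(\delta)\in\{0,|A_i|\}$. An empty sum of subgroups is $\{0\}$. *)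

From HB Require Import structures.
From mathcomp Require Import all_boot all_order all_algebra all_fingroup.
Set Implicit Arguments. Unset Strict Implicit. Unset Printing Implicit Defensive.
Import GRing.Theory.
Local Open Scope ring_scope.

(* G is a finite abelian group written additively: V : finZmodType.
   Its canonical finGroupType structure (finalg) has group law +, so
   {group V} are exactly the additive subgroups and <<S>> is the
   subgroup generated by S. *)

Definition diff_group (V : finZmodType) (A : {set V}) : {set V} :=
  <<[set x - y | x in A, y in A]>>%g.

Definition add_coset (V : finZmodType) (x : V) (H : {set V}) : {set V} :=
  [set x + h | h in H].

Definition is_coset_of (V : finZmodType) (A H : {set V}) : Prop :=
  exists x : V, A = add_coset x H.

Definition union_of_cosets (V : finZmodType) (A H : {set V}) : Prop :=
  exists S : {set V}, A = \bigcup_(x in S) add_coset x H.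

Definition Ncount (V : finZmodType) (m : nat) (A : 'I_m -> {set V})
    (i : 'I_m) (delta : V) : nat :=
  #|[set p : V * V | [&& p.1 \in A i,
                        [exists j : 'I_m, (j != i) && (p.2 \in A j)] &
                        p.1 - p.2 == delta]]|.

Definition bimodal (V : finZmodType) (m : nat) (A : 'I_m -> {set V}) : Prop :=
  forall (i : 'I_m) (delta : V), delta != 0 ->
    Ncount A i delta = 0%N \/ Ncount A i delta = #|A i|.

From mathcomp Require Import all_boot all_algebra all_fingroup.
Set Implicit Arguments.
Unset Strict Implicit.
Unset Printing Implicit Defensive.

Import GRing.Theory FinRing.Theory.
Local Open Scope ring_scope.

(* Bimodality says that, for a fixed shift e, either no point or every point
   of A_i is sent by x |-> x + e into the rest of the collection. Hence a
   translation fixing a nonempty A_i fixes the cover (the union of all A_j);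
   for i >= 2, A_i is a coset of H_i, so H_i fixes the cover. Conversely, if
   a translation h fixing the cover moved some point of A_1 out of A_1, it
   would move all of A_1 into the rest; playing this against the shifts
   y - z + h for y, z in A_1 gives A_1 + (y - z) = A_1, so A_1 would be a
   whole coset of H_1, contradicting |A_1| < |H_1|. Thus D fixes A_1, which
   yields both H_i <= H_1 and that A_1 is a union of cosets of D.
   The group of translations fixing a set A is 'N(A | 'R). *)

Section Translations.
Variable V : finZmodType.
Implicit Types (A S : {set V}) (H : {group V}) (a d x y : V).

Lemma stabRP A d :
  reflect (forall x, x \in A -> x + d \in A) (d \in 'N(A | 'R))%g.
Proof. by rewrite !inE; apply: (iffP subsetP) => nAd x /nAd; rewrite inE. Qed.

Lemma stabR_addr A d x : (d \in 'N(A | 'R))%g -> (x + d \in A) = (x \in A).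
Proof. by move/astabsP; apply. Qed.

Lemma card_add_coset a S : #|add_coset a S| = #|S|.
Proof. by rewrite card_imset //; apply: addrI. Qed.

Lemma mem_diff_group A x y : x \in A -> y \in A -> x - y \in diff_group A.
Proof. by move=> xA yA; apply/mem_gen/imset2_f. Qed.

Lemma sub_add_coset_diff_group A a :
  a \in A -> A \subset add_coset a (diff_group A).
Proof.
move=> aA; apply/subsetP=> x xA; apply/imsetP; exists (x - a).
  exact: mem_diff_group.
by rewrite addrC subrK.
Qed.

Lemma add_coset_diff_group A a :
  a \in A -> #|A| = #|diff_group A| -> A = add_coset a (diff_group A).
Proof.
move=> aA cardA; apply/eqP.
by rewrite eqEcard sub_add_coset_diff_group // card_add_coset cardA leqnn.
Qed.

Lemma add_coset_sub_stabR A H a :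
  a \in A -> (H \subset 'N(A | 'R))%g -> add_coset a H \subset A.
Proof.
move=> aA /subsetP nAH; apply/subsetP=> _ /imsetP[h hH ->].
by rewrite stabR_addr ?nAH.
Qed.

Lemma diff_group_sub_stabRE A a : a \in A ->
  (diff_group A \subset 'N(A | 'R))%g = (#|diff_group A| == #|A|).
Proof.
move=> aA; apply/idP/eqP => [nAH | cardA].
  have := subset_leq_card (add_coset_sub_stabR aA nAH).
  have := subset_leq_card (sub_add_coset_diff_group aA).
  by rewrite card_add_coset => ? ?; apply/eqP; rewrite eqn_leq; apply/andP.
rewrite {2}(add_coset_diff_group aA (esym cardA)).
apply/subsetP=> h hH; apply/stabRP=> _ /imsetP[k kH ->].
by rewrite -addrA; apply/imsetP; exists (k + h); rewrite ?groupM.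
Qed.

Lemma stabR_sub_diff_group A a : a \in A -> ('N(A | 'R) \subset diff_group A)%g.
Proof.
move=> aA; apply/subsetP=> d nAd.
have -> : d = a + d - a by rewrite addrC addKr.
by rewrite mem_diff_group ?stabR_addr.
Qed.

Lemma union_of_cosets_stabR A H :
  (H \subset 'N(A | 'R))%g -> union_of_cosets A H.
Proof.
move=> nAH; exists A; apply/eqP; rewrite eqEsubset; apply/andP; split.
  apply/subsetP=> x xA; apply/bigcupP; exists x => //; apply/imsetP.
  by exists 1%g; rewrite ?group1 // zmod1gE addr0.
by apply/bigcupsP=> x xA; apply: add_coset_sub_stabR.
Qed.

End Translations.

Section BimodalCollection.
Variables (V : finZmodType) (m : nat) (A : 'I_m -> {set V}).
Hypotheses (Adisj : forall i j, i != j -> [disjoint A i & A j])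
           (Abim : bimodal A).

Local Notation rest i := (\bigcup_(j | j != i) A j).
Local Notation cover := (\bigcup_j A j).

Lemma NcountE i d : Ncount A i d = #|[set x in A i | x - d \in rest i]|.
Proof.
have pair_inj : injective (fun x : V => (x, x - d)) by move=> x y [].
rewrite -(card_imset _ pair_inj); apply: eq_card => -[x y]; rewrite !inE /=.
apply/and3P/imsetP => [[xA /existsP[j /andP[ji yj]] /eqP <-] | [z]].
  by exists x; rewrite ?subKr // inE xA subKr; apply/bigcupP; exists j.
rewrite inE => /andP[zA /bigcupP[j ji zj]] [-> ->].
by split; rewrite ?subKr //; apply/existsP; exists j; rewrite ji.
Qed.

Lemma block_rest_disjoint i : [disjoint A i & rest i].
Proof. by apply: bigcup_disjoint => j ji; rewrite disjoint_sym Adisj. Qed.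

Lemma mem_cover i x : (x \in cover) = (x \in A i) || (x \in rest i).
Proof. by rewrite (bigD1 i) // inE. Qed.

Lemma bimodal_shift i a e : a \in A i -> a + e \in rest i ->
  {in A i, forall x, x + e \in rest i}.
Proof.
move=> aA aeR.
have e_neq0 : - e != 0.
  rewrite oppr_eq0; apply: contraTneq aeR => ->.
  by rewrite addr0 (disjointFr (block_rest_disjoint i)).
set B := [set x in A i | x - - e \in rest i].
have aB : a \in B by rewrite inE aA opprK.
have BA : B \subset A i by apply/subsetP=> x; rewrite inE => /andP[].
have cardB : #|B| = #|A i|.
  case: (Abim i e_neq0); rewrite NcountE -/B // => /eqP.
  by rewrite cards_eq0 => /eqP B0; rewrite B0 inE in aB.
have BE : B = A i by apply/eqP; rewrite eqEcard BA cardB leqnn.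
by move=> x; rewrite -BE inE opprK => /andP[].
Qed.

Lemma stabR_block_sub_cover i : A i != set0 ->
  ('N(A i | 'R) \subset 'N(cover | 'R))%g.
Proof.
case/set0Pn=> a aA; apply/subsetP=> h nAh; apply/stabRP=> u.
rewrite !(mem_cover i) => /orP[uA | uR]; first by rewrite stabR_addr ?uA.
have := bimodal_shift (e := u - a) aA; rewrite addrC subrK => /(_ uR (a + h)).
rewrite (stabR_addr a nAh) => /(_ aA).
by rewrite addrAC [a + _]addrC subrK => ->; rewrite orbT.
Qed.

Lemma shift_within_block i e y : y \in A i -> y + e \in A i ->
  {in A i, forall x, x + e \in cover} -> {in A i, forall x, x + e \in A i}.
Proof.
move=> yA yeA xeU x xA; move: (xeU x xA); rewrite (mem_cover i).
case/orP=> // /(bimodal_shift xA)/(_ y yA).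
by rewrite (disjointFr (block_rest_disjoint i) yeA).
Qed.

Lemma stabR_cover_sub_block i : ~~ (diff_group (A i) \subset 'N(A i | 'R))%g ->
  ('N(cover | 'R) \subset 'N(A i | 'R))%g.
Proof.
move=> not_coset; apply/subsetP=> h nUh; apply/stabRP=> x xA.
apply: contraNT not_coset => xh_notA.
have xhR : x + h \in rest i.
  have : x + h \in cover by rewrite (stabR_addr x nUh) (mem_cover i) xA.
  by rewrite (mem_cover i) (negPf xh_notA).
have hR := bimodal_shift xA xhR.
rewrite gen_subG; apply/subsetP=> _ /imset2P[y z yA zA ->]; apply/stabRP.
apply: (shift_within_block zA); first by rewrite addrC subrK.
move=> a aA; rewrite -(stabR_addr _ nUh) (mem_cover i) -addrA.
have zeR : z + (y - z + h) \in rest i by rewrite addrA [z + _]addrC subrK hR.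
by rewrite (bimodal_shift zA zeR) ?orbT.
Qed.

End BimodalCollection.

Theorem proposition3p13 (V : finZmodType) (n : nat) (A : 'I_n.+1 -> {set V})
  (Hdisj : forall i j : 'I_n.+1, i != j -> [disjoint A i & A j])
  (Hne : forall i : 'I_n.+1, A i != set0)
  (Hbim : bimodal A)
  (H1 : (#|A ord0| < #|diff_group (A ord0)|)%N)
  (Hi : forall i : 'I_n.+1, i != ord0 -> #|A i| = #|diff_group (A i)|) :
  (forall i : 'I_n.+1, i != ord0 ->
     is_coset_of (A i) (diff_group (A i)) /\
     diff_group (A i) \subset diff_group (A ord0)) /\
  ((exists x : V, A ord0 \proper add_coset x (diff_group (A ord0))) /\
   union_of_cosets (A ord0)
     <<\bigcup_(i : 'I_n.+1 | i != ord0) diff_group (A i)>>%g).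
Proof.
have [a aA0] := set0Pn _ (Hne ord0).
have A0_not_coset : ~~ (diff_group (A ord0) \subset 'N(A ord0 | 'R))%g.
  by rewrite (diff_group_sub_stabRE aA0) gtn_eqF.
have stabA0 i : i != ord0 -> (diff_group (A i) \subset 'N(A ord0 | 'R))%g.
  move=> i0; have [b bAi] := set0Pn _ (Hne i).
  have Ai_coset : (diff_group (A i) \subset 'N(A i | 'R))%g.
    by rewrite (diff_group_sub_stabRE bAi) Hi.
  apply: subset_trans (stabR_cover_sub_block Hdisj Hbim A0_not_coset).
  exact: subset_trans Ai_coset (stabR_block_sub_cover Hdisj Hbim (Hne i)).
split=> [i i0 | ].
  split; last exact: subset_trans (stabA0 i i0) (stabR_sub_diff_group aA0).
  have [b bAi] := set0Pn _ (Hne i).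
  by exists b; apply: add_coset_diff_group; rewrite ?Hi.
split.
  by exists a; rewrite properEcard sub_add_coset_diff_group ?card_add_coset.
by apply: union_of_cosets_stabR; rewrite gen_subG; apply/bigcupsP.
Qed.
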